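(* Let $(\mathfrak g,[\,,\,]_0,\rho,[\,,\,],\mathfrak B,r,\lambda)$ be a triple Lie algebra and $\{\,,\,\}_r$ the Lie–Poisson bracket $\{f,g\}_r(a^* )=\langle[df(a^* ),dg(a^* )]_r,a^*\rangle$ on $\mathfrak g^*$. Let $\mathcal H\in C^\infty(\mathfrak g^* )$ satisfy $\langle d\mathcal H(a^* ),\rho^*(x)a^*\rangle=\langle d\mathcal H(a^* ),\mathrm{ad}^*(x)a^*\rangle=0$ for all $a^*\in\mathfrak g^*$, $x\in\mathfrak g$. Let $\{e_i\}$ be a basis of $\mathfrak g$ and $\{e^i\}$ the dual basis with respect to $\mathfrak B$ ($\mathfrak B(e_i,e^j)=\delta_{ij}$), $\Omega=\sum_ie_i\otimes e^i$, and define smooth maps $L,M:\mathfrak g^*\to\mathfrak g$ by $L(a^* )=(a^*\otimes1)(\Omega)=\sum_i\langle a^*,e_i\rangle e^i$ and $M(a^* )=\tilde r(d\mathcal H(a^* ))$. Then $dL(a^* )X_{\mathcal H}(a^* )=-\rho(M(a^* ))L(a^* )$ for all $a^*\in\mathfrak g^*$, where $X_{\mathcal H}f=\{\mathcal H,f\}_r$; hence $(\mathfrak g,\rho,\mathfrak g,L,M)$ is a self-dual nonabelian generalized Lax pair for the Hamiltonian system $(\mathfrak g^*,\{\,,\,\}_r,\mathcal H)$ (with $\mathfrak a=(\mathfrak g,[\,,\,])$ and form $\mathfrak B$).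
   Context: All spaces are finite-dimensional real. A triple Lie algebra $(\mathfrak g,[\,,\,]_0,\rho,[\,,\,],\mathfrak B,r,\lambda)$ consists of: a Lie algebra $(\mathfrak g,[\,,\,]_0)$; a second Lie bracket $[\,,\,]$ on the same vector space and a representation $\rho$ of $(\mathfrak g,[\,,\,]_0)$ on $\mathfrak g$ with each $\rho(x)$ a derivation of $(\mathfrak g,[\,,\,])$ (write $x\cdot y=\rho(x)y$); a nondegenerate symmetric bilinear form $\mathfrak B$ with $\mathfrak B([x,y],z)=\mathfrak B(x,[y,z])$ and $\mathfrak B(\rho(\xi)x,y)+\mathfrak B(x,\rho(\xi)y)=0$; an element $r\in\mathfrak g\otimes\mathfrak g$, identified with $r:\mathfrak g^*\to\mathfrak g$ by $\langle r(a^* ),b^*\rangle=\langle a^*\otimes b^*,r\rangle$, and $\lambda\in\mathbb R$ such that, with $\varphi(x)=\mathfrak B(x,\cdot)$ and $\tilde r=r\varphi:\mathfrak g\to\mathfrak g$, $[x,y]_r=\tilde r(x)\cdot y-\tilde r(y)\cdot x+\lambda[x,y]$ is a Lie bracket. $df(a^* )\in\mathfrak g=\mathfrak g^{**}$; $\langle\rho^*(x)a^*,y\rangle=-\langle a^*,\rho(x)y\rangle$; $\langle\mathrm{ad}^*(x)a^*,y\rangle=-\langle a^*,[x,y]\rangle$. For a Lie algebra $\mathfrak k$ and a $\mathfrak k$-Lie algebra $(\mathfrak a,\rho)$ (a Lie algebra $\mathfrak a$ with Lie homomorphism $\rho:\mathfrak k\to\mathrm{Der}(\mathfrak a)$), a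 nonabelian generalized Lax pair for a Hamiltonian system $(P,w,\mathcal H)$ is $(\mathfrak k,\rho,\mathfrak a,L,M)$ with smooth $L:P\to\mathfrak a$, $M:P\to\mathfrak k$ and $dL(p)X_{\mathcal H}(p)=-\rho(M(p))L(p)$; it is self-dual if $\mathfrak a$ carries a nondegenerate symmetric bilinear form $\mathfrak B$ with $\mathfrak B([x,y],z)=\mathfrak B(x,[y,z])$ and $\mathfrak B(\rho(\xi)x,y)+\mathfrak B(x,\rho(\xi)y)=0$. *)

From Stdlib Require Import Reals.
From mathcomp Require Import ssreflect ssrfun ssrbool eqtype ssrnat seq fintype bigop.
Set Implicit Arguments.
Unset Strict Implicit.
Open Scope R_scope.

(* The n-dimensional real vector space R^n (coordinates w.r.t. a fixed
   standard basis).  Both g and g^* are modelled by vec n. *)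
Definition vec (n : nat) := 'I_n -> R.

Definition rsum (n : nat) (F : 'I_n -> R) : R := \big[Rplus/R0]_(i < n) F i.

Definition vzero (n : nat) : vec n := fun _ => R0.
Arguments vzero n : clear implicits.
Definition vadd (n : nat) (x y : vec n) : vec n := fun i => x i + y i.
Definition vscale (n : nat) (c : R) (x : vec n) : vec n := fun i => c * x i.
Definition vopp (n : nat) (x : vec n) : vec n := fun i => - x i.
Definition vsub (n : nat) (x y : vec n) : vec n := fun i => x i - y i.
Definition vsum (n m : nat) (F : 'I_m -> vec n) : vec n :=
  \big[(@vadd n)/(vzero n)]_(i < m) F i.
Definition ev (n : nat) (j : 'I_n) : vec n := fun i => if i == j then R1 else R0.

Definition pair (n : nat) (a x : vec n) : R := rsum (fun i => a i * x i).

Definition vnorm (n : nat) (v : vec n) : R := sqrt (rsum (fun i => v i * v i)).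

Definition lin (n : nat) (f : vec n -> vec n) : Prop :=
  (forall x y, f (vadd x y) = vadd (f x) (f y)) /\
  (forall c x, f (vscale c x) = vscale c (f x)).

Definition bilin (n : nat) (b : vec n -> vec n -> vec n) : Prop :=
  (forall x, lin (b x)) /\ (forall y, lin (fun x => b x y)).

Definition bilinR (n : nat) (b : vec n -> vec n -> R) : Prop :=
  (forall x y z, b (vadd x y) z = b x z + b y z) /\
  (forall c x z, b (vscale c x) z = c * b x z) /\
  (forall x y z, b x (vadd y z) = b x y + b x z) /\
  (forall c x z, b x (vscale c z) = c * b x z).

Definition is_lie (n : nat) (b : vec n -> vec n -> vec n) : Prop :=
  bilin b /\
  (forall x, b x x = vzero n) /\
  (forall x y z, vadd (b x (b y z)) (vadd (b y (b z x)) (b z (b x y))) = vzero n).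

Definition is_basis (n : nat) (e : 'I_n -> vec n) : Prop :=
  (forall c : 'I_n -> R, vsum (fun i => vscale (c i) (e i)) = vzero n ->
     forall i, c i = 0) /\
  (forall v : vec n, exists c : 'I_n -> R, v = vsum (fun i => vscale (c i) (e i))).

Definition rep_by_derivations (n : nat) (br0 rho br : vec n -> vec n -> vec n)
  : Prop :=
  bilin rho /\
  (forall x y z, rho (br0 x y) z = vsub (rho x (rho y z)) (rho y (rho x z))) /\
  (forall x y z, rho x (br y z) = vadd (br (rho x y) z) (br y (rho x z))).

Definition invariant_form (n : nat) (rho br : vec n -> vec n -> vec n)
  (B : vec n -> vec n -> R) : Prop :=
  bilinR B /\
  (forall x y, B x y = B y x) /\
  (forall x, (forall y, B x y = 0) -> x = vzero n) /\
  (forall x y z, B (br x y) z = B x (br y z)) /\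
  (forall xi x y, B (rho xi x) y + B x (rho xi y) = 0).

(* r = sum_{i,j} rr i j (eps_i (x) eps_j) in g (x) g, viewed as r : g^* -> g
   via <r(a^), b^> = <a^ (x) b^, r> (^ = dual). *)
Definition r_map (n : nat) (rr : 'I_n -> 'I_n -> R) (a : vec n) : vec n :=
  fun j => rsum (fun i => a i * rr i j).

Definition phiB (n : nat) (B : vec n -> vec n -> R) (x : vec n) : vec n :=
  fun k => B x (ev k).

Definition rtilde (n : nat) (rr : 'I_n -> 'I_n -> R) (B : vec n -> vec n -> R)
  (x : vec n) : vec n := r_map rr (phiB B x).

Definition bracket_r (n : nat) (rho br : vec n -> vec n -> vec n)
  (rr : 'I_n -> 'I_n -> R) (B : vec n -> vec n -> R) (lam : R)
  (x y : vec n) : vec n :=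
  vadd (vsub (rho (rtilde rr B x) y) (rho (rtilde rr B y) x)) (vscale lam (br x y)).

Definition triple_lie_algebra (n : nat) (br0 rho br : vec n -> vec n -> vec n)
  (B : vec n -> vec n -> R) (rr : 'I_n -> 'I_n -> R) (lam : R) : Prop :=
  is_lie br0 /\ is_lie br /\ rep_by_derivations br0 rho br /\
  invariant_form rho br B /\ is_lie (bracket_r rho br rr B lam).

Definition rho_star (n : nat) (rho : vec n -> vec n -> vec n) (x a : vec n) : vec n :=
  fun j => - pair a (rho x (ev j)).
Definition ad_star (n : nat) (br : vec n -> vec n -> vec n) (x a : vec n) : vec n :=
  fun j => - pair a (br x (ev j)).

Definition continuous_v (n : nat) (f : vec n -> R) : Prop :=
  forall a eps, 0 < eps -> exists delta, 0 < delta /\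
    forall b, vnorm (vsub b a) < delta -> Rabs (f b - f a) < eps.

(* f : g^* -> R is (Frechet) differentiable at a with df(a) = d in g = g^** *)
Definition has_differential (n : nat) (f : vec n -> R) (a d : vec n) : Prop :=
  forall eps, 0 < eps -> exists delta, 0 < delta /\
    forall h, vnorm h < delta ->
      Rabs (f (vadd a h) - f a - pair h d) <= eps * vnorm h.

Definition has_vdifferential (n : nat) (F : vec n -> vec n) (a : vec n)
  (D : vec n -> vec n) : Prop :=
  lin D /\
  forall eps, 0 < eps -> exists delta, 0 < delta /\
    forall h, vnorm h < delta ->
      vnorm (vsub (vsub (F (vadd a h)) (F a)) (D h)) <= eps * vnorm h.

Fixpoint Ck (n : nat) (k : nat) (f : vec n -> R) {struct k} : Prop :=
  match k with
  | O => continuous_v f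
  | S k' => exists df : vec n -> vec n,
      (forall a, has_differential f a (df a)) /\
      (forall j : 'I_n, Ck k' (fun a => df a j))
  end.

Definition smooth (n : nat) (f : vec n -> R) : Prop := forall k, Ck k f.

Definition smooth_v (n : nat) (F : vec n -> vec n) : Prop :=
  forall j : 'I_n, smooth (fun a => F a j).

(* Lie-Poisson bracket {f,g}_r(a) = <[df(a), dg(a)]_r, a>, given the
   differentials df, dg *)
Definition poisson (n : nat) (brr : vec n -> vec n -> vec n)
  (df dg : vec n -> vec n) (a : vec n) : R :=
  pair a (brr (df a) (dg a)).

(* X is the Hamiltonian vector field of H (with differential dH):
   X_H f = {H, f}_r for every smooth f, i.e. df(a)(X_H(a)) = {H,f}_r(a). *)
Definition hamiltonian_vf (n : nat) (brr : vec n -> vec n -> vec n)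
  (dH : vec n -> vec n) (X : vec n -> vec n) : Prop :=
  forall (f : vec n -> R) (df : vec n -> vec n),
    smooth f -> (forall b, has_differential f b (df b)) ->
    forall a, pair (X a) (df a) = poisson brr dH df a.

(* Self-dual nonabelian generalized Lax pair (k = g with [,]_0, a = g with [,],
   rho, L, M) for the Hamiltonian system on P = g^* with Hamiltonian vector
   field X:  dL(p) X(p) = - rho(M(p)) L(p). *)
Definition self_dual_lax_pair (n : nat) (br0 rho br : vec n -> vec n -> vec n)
  (B : vec n -> vec n -> R) (L M X : vec n -> vec n) : Prop :=
  is_lie br0 /\ is_lie br /\ bilin rho /\
  (forall x y z, rho (br0 x y) z = vsub (rho x (rho y z)) (rho y (rho x z))) /\
  (forall x y z, rho x (br y z) = vadd (br (rho x y) z) (br y (rho x z))) /\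
  invariant_form rho br B /\
  smooth_v L /\ smooth_v M /\
  (forall p, (exists D, has_vdifferential L p D) /\
     forall D, has_vdifferential L p D -> D (X p) = vopp (rho (M p) (L p))).

From HB Require Import structures.
From Stdlib Require Import Reals Lra FunctionalExtensionality.
From mathcomp Require Import ssreflect ssrfun ssrbool eqtype ssrnat seq fintype bigop.
Set Implicit Arguments.
Unset Strict Implicit.
Open Scope R_scope.

(* Identify g and g^* with R^n.  The map L(a) = sum_i <a, e_i> e^i is linear
   and B-dual to the identity: B(L(b), y) = <b, y>.  Testing the Hamiltonian
   vector field X_H on the linear functions b |-> <b, y> gives
   <X_H(a), y> = <a, [dH(a), y]_r>; the invariance of H under rho^* and ad^*
   kills the terms rho(r~(y)) dH(a) and lambda [dH(a), y], leaving
   <a, rho(M(a)) y>.  By rho-invariance and nondegeneracy of B this is exactly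
   L(X_H(a)) = - rho(M(a)) L(a).  Since L is linear it is its own (unique)
   differential, which yields the Lax equation dL(a) X_H(a) = -rho(M(a)) L(a). *)

(* (R, +, 0) and (R, *, 0) as bigop monoid laws, so that rsum enjoys the
   generic big-operator lemmas (splitting, distributivity, morphisms). *)
Lemma Rplus_associative : associative Rplus. Proof. by move=> x y z; ring. Qed.
HB.instance Definition _ :=
  Monoid.isComLaw.Build R R0 Rplus Rplus_associative Rplus_comm Rplus_0_l.
Lemma Rmult_left_zero : left_zero R0 Rmult. Proof. by move=> x; ring. Qed.
Lemma Rmult_right_zero : right_zero R0 Rmult. Proof. by move=> x; ring. Qed.
HB.instance Definition _ := Monoid.isMulLaw.Build R R0 Rmult Rmult_left_zero Rmult_right_zero.
Lemma Rmult_left_distributive : left_distributive Rmult Rplus. Proof. by move=> x y z; ring. Qed.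
Lemma Rmult_right_distributive : right_distributive Rmult Rplus. Proof. by move=> x y z; ring. Qed.
HB.instance Definition _ :=
  Monoid.isAddLaw.Build R Rmult Rplus Rmult_left_distributive Rmult_right_distributive.

Section LinearAlgebra.
Variable n : nat.

Lemma rsum_add (f g : 'I_n -> R) : rsum (fun i => f i + g i) = rsum f + rsum g.
Proof. by rewrite /rsum big_split. Qed.

Lemma rsum_scal (c : R) (f : 'I_n -> R) : rsum (fun i => c * f i) = c * rsum f.
Proof. by rewrite /rsum big_distrr. Qed.

Lemma rsum_ev (F : 'I_n -> R) j : rsum (fun i => F i * ev j i) = F j.
Proof.
rewrite /rsum (bigD1 j) //= big1 /ev ?eqxx; first ring.
by move=> i /negbTE ->; ring.
Qed.

Lemma vsum_app m (F : 'I_m -> vec n) j : vsum F j = rsum (fun i => F i j).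
Proof.
by rewrite /vsum /rsum (big_morph (fun v : vec n => v j) (id1 := R0) (op1 := Rplus)).
Qed.

Lemma pair_addl (a b x : vec n) : pair (vadd a b) x = pair a x + pair b x.
Proof. by rewrite /pair -rsum_add; congr rsum; apply: functional_extensionality => i; rewrite /vadd; ring. Qed.

Lemma pair_addr (a x y : vec n) : pair a (vadd x y) = pair a x + pair a y.
Proof. by rewrite /pair -rsum_add; congr rsum; apply: functional_extensionality => i; rewrite /vadd; ring. Qed.

Lemma pair_scall c (a x : vec n) : pair (vscale c a) x = c * pair a x.
Proof. by rewrite /pair -rsum_scal; congr rsum; apply: functional_extensionality => i; rewrite /vscale; ring. Qed.

Lemma pair_scalr c (a x : vec n) : pair a (vscale c x) = c * pair a x.
Proof. by rewrite /pair -rsum_scal; congr rsum; apply: functional_extensionality => i; rewrite /vscale; ring. Qed.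

Lemma pair_subr (a x y : vec n) : pair a (vsub x y) = pair a x - pair a y.
Proof.
have -> : vsub x y = vadd x (vscale (-1) y).
  by apply: functional_extensionality => i; rewrite /vsub /vadd /vscale; ring.
by rewrite pair_addr pair_scalr; ring.
Qed.

Lemma pair_comm (a x : vec n) : pair a x = pair x a.
Proof. by rewrite /pair; congr rsum; apply: functional_extensionality => i; ring. Qed.

Lemma pair_ev (a : vec n) j : pair a (ev j) = a j.
Proof. exact: rsum_ev. Qed.

Lemma vdecomp (v : vec n) : v = vsum (fun k => vscale (v k) (ev k)).
Proof.
apply: functional_extensionality => j; rewrite vsum_app /vscale.
have -> : (fun i => v i * ev i j) = (fun i => v i * ev j i).
  by apply: functional_extensionality => i; rewrite /ev eq_sym.
by rewrite rsum_ev.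
Qed.

Lemma vscale0 (v : vec n) : vscale 0 v = vzero n.
Proof. by apply: functional_extensionality => i; rewrite /vscale /vzero; ring. Qed.

Lemma lin_vsum m (f : vec n -> vec n) (F : 'I_m -> vec n) :
  lin f -> f (vsum F) = vsum (fun i => f (F i)).
Proof.
move=> [Hadd Hscal]; rewrite /vsum (big_morph f (id1 := vzero n) (op1 := @vadd n)).
- by [].
- exact: Hadd.
- by rewrite -{1}(vscale0 (vzero n)) Hscal vscale0.
Qed.

Definition linear_form (f : vec n -> R) : Prop :=
  (forall x y, f (vadd x y) = f x + f y) /\ (forall c x, f (vscale c x) = c * f x).

Lemma pair_form_r (a : vec n) : linear_form (pair a).
Proof. by split=> [x y|c x]; rewrite ?pair_addr ?pair_scalr. Qed.

Lemma form_vsum m (f : vec n -> R) (F : 'I_m -> vec n) :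
  linear_form f -> f (vsum F) = rsum (fun i => f (F i)).
Proof.
move=> [Hadd Hscal]; rewrite /vsum /rsum (big_morph f (id1 := R0) (op1 := Rplus)).
- by [].
- exact: Hadd.
- by rewrite -{1}(vscale0 (vzero n)) Hscal; ring.
Qed.

Lemma form_basis_ext (e : 'I_n -> vec n) (f g : vec n -> R) :
  is_basis e -> linear_form f -> linear_form g ->
  (forall k, f (e k) = g (e k)) -> forall y, f y = g y.
Proof.
move=> [_ Hspan] Lf Lg Hk y; have [c ->] := Hspan y.
rewrite (form_vsum _ Lf) (form_vsum _ Lg); congr rsum.
by apply: functional_extensionality => k; rewrite (proj2 Lf) (proj2 Lg) Hk.
Qed.

Lemma lin_coord (F : vec n -> vec n) (x : vec n) j :
  lin F -> F x j = pair x (fun k => F (ev k) j).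
Proof.
move=> LF; rewrite {1}(vdecomp x) (lin_vsum _ LF) vsum_app /pair; congr rsum.
by apply: functional_extensionality => k; rewrite (proj2 LF).
Qed.

Lemma pair_dual_action (f : vec n -> vec n) (a x : vec n) :
  lin f -> pair (fun j => - pair a (f (ev j))) x = - pair a (f x).
Proof.
move=> Lf; rewrite {2}(vdecomp x) (lin_vsum _ Lf) (form_vsum _ (pair_form_r a)).
have -> : forall g : 'I_n -> R, - rsum g = rsum (fun i => -1 * g i).
  by move=> g; rewrite rsum_scal; ring.
rewrite {1}/pair; congr rsum; apply: functional_extensionality => i.
by rewrite (proj2 Lf) pair_scalr; ring.
Qed.

End LinearAlgebra.

Section Calculus.
Variable n : nat.

Lemma vnorm_nonneg (v : vec n) : 0 <= vnorm v.
Proof. exact: sqrt_pos. Qed.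

Lemma coord_le (v : vec n) j : Rabs (v j) <= vnorm v.
Proof.
rewrite /vnorm -sqrt_Rsqr_abs; apply: sqrt_le_1_alt; rewrite /Rsqr /rsum (bigD1 j) //=.
rewrite -{1}(Rplus_0_r (v j * v j)); apply: Rplus_le_compat_l.
by apply: (big_ind (fun x => 0 <= x)) => [|x y|i _]; [lra | lra | nra].
Qed.

Lemma vnorm_scaled_ev t (j : 'I_n) : 0 <= t -> vnorm (vscale t (ev j)) = t.
Proof.
move=> Ht; rewrite /vnorm.
have -> : (fun i => vscale t (ev j) i * vscale t (ev j) i) = (fun i => (t * t) * ev j i).
  by apply: functional_extensionality => i; rewrite /vscale /ev; case: (i == j); ring.
by rewrite (@rsum_ev n (fun _ => t * t)) sqrt_square.
Qed.

Lemma vnorm_zero : vnorm (vzero n) = 0.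
Proof.
rewrite /vnorm /rsum big1 ?sqrt_0 // => i _.
by rewrite /vzero; ring.
Qed.

Lemma Rabs_scal_bound (c u b : R) :
  0 <= b -> Rabs u <= b / (Rabs c + 1) -> Rabs (c * u) <= b.
Proof.
move=> Hb Hu; have Hc := Rabs_pos c; rewrite Rabs_mult.
have Heq : b = (Rabs c + 1) * (b / (Rabs c + 1)) by field; lra.
have := Rabs_pos u; nra.
Qed.

Lemma continuous_add (f g : vec n -> R) :
  continuous_v f -> continuous_v g -> continuous_v (fun a => f a + g a).
Proof.
move=> Hf Hg a eps He.
have He2 : 0 < eps / 2 by lra.
have [d1 [Hd1 H1]] := Hf a _ He2; have [d2 [Hd2 H2]] := Hg a _ He2.
exists (Rmin d1 d2); split=> [|b Hb]; first exact: Rmin_pos.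
have := H1 b (Rlt_le_trans _ _ _ Hb (Rmin_l _ _)).
have := H2 b (Rlt_le_trans _ _ _ Hb (Rmin_r _ _)).
have := Rabs_triang (f b - f a) (g b - g a).
have -> : f b - f a + (g b - g a) = f b + g b - (f a + g a) by ring.
lra.
Qed.

Lemma differential_add (f g : vec n -> R) a df dg :
  has_differential f a df -> has_differential g a dg ->
  has_differential (fun b => f b + g b) a (vadd df dg).
Proof.
move=> Hf Hg eps He.
have He2 : 0 < eps / 2 by lra.
have [d1 [Hd1 H1]] := Hf _ He2; have [d2 [Hd2 H2]] := Hg _ He2.
exists (Rmin d1 d2); split=> [|h Hh]; first exact: Rmin_pos.
have := H1 h (Rlt_le_trans _ _ _ Hh (Rmin_l _ _)).
have := H2 h (Rlt_le_trans _ _ _ Hh (Rmin_r _ _)).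
set u := f _ - _ - _; set v := g _ - _ - _.
have := Rabs_triang u v.
have -> : u + v = f (vadd a h) + g (vadd a h) - (f a + g a) - pair h (vadd df dg).
  by rewrite pair_addr /u /v; ring.
lra.
Qed.

Lemma continuous_scal c (f : vec n -> R) :
  continuous_v f -> continuous_v (fun a => c * f a).
Proof.
move=> Hf a eps He.
have He' : 0 < eps / 2 / (Rabs c + 1) by apply: Rdiv_lt_0_compat; have := Rabs_pos c; lra.
have [d [Hd H]] := Hf a _ He'; exists d; split=> // b Hb.
have -> : c * f b - c * f a = c * (f b - f a) by ring.
have := @Rabs_scal_bound c (f b - f a) (eps / 2); have := H b Hb; lra.
Qed.

Lemma differential_scal c (f : vec n -> R) a d :
  has_differential f a d -> has_differential (fun b => c * f b) a (vscale c d).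
Proof.
move=> Hf eps He.
have He' : 0 < eps / (Rabs c + 1) by apply: Rdiv_lt_0_compat; have := Rabs_pos c; lra.
have [delta [Hd H]] := Hf _ He'; exists delta; split=> // h Hh.
have -> : c * f (vadd a h) - c * f a - pair h (vscale c d) =
          c * (f (vadd a h) - f a - pair h d) by rewrite pair_scalr; ring.
have Hh0 := vnorm_nonneg h.
apply: Rabs_scal_bound; first nra.
have -> : eps * vnorm h / (Rabs c + 1) = eps / (Rabs c + 1) * vnorm h.
  by field; have := Rabs_pos c; lra.
exact: H.
Qed.

Lemma differential_pair w a : has_differential (fun b : vec n => pair b w) a w.
Proof.
move=> eps He; exists 1; split=> [|h _]; first lra.
rewrite pair_addl.
have -> : pair a w + pair h w - pair a w - pair h w = 0 by ring.
by rewrite Rabs_R0; have := vnorm_nonneg h; nra.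
Qed.

Lemma Ck_const k c : Ck k (fun _ : vec n => c).
Proof.
elim: k c => [|k IH] c /=.
- move=> a eps He; exists 1; split=> [|b _]; first lra.
  by rewrite Rminus_diag Rabs_R0.
- exists (fun _ => vzero n); split=> // a eps He; exists 1; split=> [|h _]; first lra.
  rewrite /pair /rsum big1 => [|i _]; last by rewrite /vzero; ring.
  by rewrite Rminus_diag Rminus_0_r Rabs_R0; have := vnorm_nonneg h; nra.
Qed.

Lemma Ck_add k (f g : vec n -> R) : Ck k f -> Ck k g -> Ck k (fun a => f a + g a).
Proof.
elim: k f g => [|k IH] f g /=; first exact: continuous_add.
move=> [df [Hdf Cf]] [dg [Hdg Cg]].
exists (fun a => vadd (df a) (dg a)); split=> [a|j]; first exact: differential_add.
exact: IH.
Qed.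

Lemma Ck_scal k c (f : vec n -> R) : Ck k f -> Ck k (fun a => c * f a).
Proof.
elim: k f => [|k IH] f /=; first exact: continuous_scal.
move=> [df [Hdf Cf]].
exists (fun a => vscale c (df a)); split=> [a|j]; first exact: differential_scal.
exact: IH.
Qed.

Lemma Ck_rsum k m (G : 'I_m -> vec n -> R) :
  (forall i, Ck k (G i)) -> Ck k (fun a => rsum (fun i => G i a)).
Proof.
move=> HG.
have -> : (fun a => rsum (fun i => G i a)) =
          \big[(fun f g => fun a => f a + g a)/(fun _ => R0)]_(i < m) G i.
  apply: functional_extensionality => a; rewrite /rsum.
  by rewrite (big_morph (fun F : vec n -> R => F a) (id1 := R0) (op1 := Rplus)).
apply: (big_ind (Ck k)) => // [|f g]; [exact: Ck_const | exact: Ck_add].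
Qed.

Lemma Ck_coord k j : Ck k (fun a : vec n => a j).
Proof.
case: k => [|k] /=.
- move=> a eps He; exists eps; split=> // b Hb.
  by have := coord_le (vsub b a) j; change (vsub b a j) with (b j - a j); lra.
- exists (fun _ => ev j); split=> [a|i]; last exact: Ck_const.
  have -> : (fun a : vec n => a j) = (fun a => pair a (ev j)).
    by apply: functional_extensionality => b; rewrite pair_ev.
  exact: differential_pair.
Qed.

Lemma smooth_pair w : smooth (fun a : vec n => pair a w).
Proof.
move=> k; rewrite /pair; apply: (@Ck_rsum k n (fun i a => a i * w i)) => i.
have -> : (fun a : vec n => a i * w i) = (fun a => w i * a i).
  by apply: functional_extensionality => a; ring.
exact/Ck_scal/Ck_coord.
Qed.

(* [has_slope A u]: A t = t u + o(t) as t -> 0+.  Derivatives are detected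
   through such one-sided slopes along the coordinate axes. *)
Definition has_slope (A : R -> R) (u : R) : Prop :=
  forall eps, 0 < eps -> exists delta, 0 < delta /\
    forall t, 0 < t < delta -> Rabs (A t - t * u) <= eps * t.

Lemma slope_unique (A : R -> R) (u v : R) : has_slope A u -> has_slope A v -> u = v.
Proof.
move=> Hu Hv; case: (Req_dec u v) => // Huv.
have Hp : 0 < Rabs (u - v) by apply: Rabs_pos_lt; lra.
have He : 0 < Rabs (u - v) / 4 by lra.
have [d1 [Hd1 K1]] := Hu _ He; have [d2 [Hd2 K2]] := Hv _ He.
have Hmin := Rmin_pos _ _ Hd1 Hd2.
have := Rmin_l d1 d2; have := Rmin_r d1 d2; set t := Rmin d1 d2 / 2 => Hm2 Hm1.
have := K1 t ltac:(rewrite /t; lra); have := K2 t ltac:(rewrite /t; lra).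
have := Rabs_triang (A t - t * v) (- (A t - t * u)); rewrite Rabs_Ropp.
have -> : A t - t * v + - (A t - t * u) = t * (u - v) by ring.
rewrite Rabs_mult Rabs_pos_eq; last by rewrite /t; lra.
have : 0 < t by rewrite /t; lra.
nra.
Qed.

Lemma differential_slope (f : vec n -> R) a d j :
  has_differential f a d ->
  has_slope (fun t => f (vadd a (vscale t (ev j))) - f a) (d j).
Proof.
move=> Hf eps He; have [delta [Hd H]] := Hf _ He; exists delta; split=> // t Ht.
have Hn := vnorm_scaled_ev j (Rlt_le _ _ (proj1 Ht)).
have := H (vscale t (ev j)); rewrite Hn pair_scall pair_comm pair_ev.
by move=> /(_ (proj2 Ht)).
Qed.

Lemma vdifferential_slope (F : vec n -> vec n) a D j k :
  has_vdifferential F a D ->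
  has_slope (fun t => F (vadd a (vscale t (ev k))) j - F a j) (D (ev k) j).
Proof.
move=> [LD HF] eps He; have [delta [Hd H]] := HF _ He; exists delta; split=> // t Ht.
have Hn := vnorm_scaled_ev k (Rlt_le _ _ (proj1 Ht)).
have := Rle_trans _ _ _ (coord_le _ j) (H (vscale t (ev k)) ltac:(rewrite Hn; lra)).
by rewrite Hn (proj2 LD) /vsub /vscale.
Qed.

Lemma differential_unique (f : vec n -> R) a (d d' : vec n) :
  has_differential f a d -> has_differential f a d' -> d = d'.
Proof.
move=> Hd Hd'; apply: functional_extensionality => j.
exact: slope_unique (differential_slope j Hd) (differential_slope j Hd').
Qed.

Lemma vdifferential_unique (F : vec n -> vec n) a D D' :
  has_vdifferential F a D -> has_vdifferential F a D' -> forall h, D h = D' h.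
Proof.
move=> HD HD' h.
have Hev : forall k, D (ev k) = D' (ev k).
  move=> k; apply: functional_extensionality => j.
  exact: slope_unique (vdifferential_slope j k HD) (vdifferential_slope j k HD').
rewrite (vdecomp h) (lin_vsum _ (proj1 HD)) (lin_vsum _ (proj1 HD')).
by congr vsum; apply: functional_extensionality => k; rewrite (proj2 (proj1 HD)) (proj2 (proj1 HD')) Hev.
Qed.

Lemma smooth_differential (f : vec n -> R) (df : vec n -> vec n) :
  smooth f -> (forall a, has_differential f a (df a)) ->
  forall j, smooth (fun a => df a j).
Proof.
move=> Hf Hdf j k; have [df' [Hdf' Cdf']] := Hf k.+1.
have -> : (fun a => df a j) = (fun a => df' a j).
  by apply: functional_extensionality => a; rewrite (differential_unique (Hdf a) (Hdf' a)).
exact: Cdf'.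
Qed.

Lemma lin_vdifferential (F : vec n -> vec n) a : lin F -> has_vdifferential F a F.
Proof.
move=> LF; split=> // eps He; exists 1; split=> [|h _]; first lra.
have -> : vsub (vsub (F (vadd a h)) (F a)) (F h) = vzero n.
  by rewrite (proj1 LF); apply: functional_extensionality => j; rewrite /vsub /vadd /vzero; ring.
by rewrite vnorm_zero; have := vnorm_nonneg h; nra.
Qed.

Lemma smooth_v_lin_comp (F G : vec n -> vec n) :
  lin F -> (forall j, smooth (fun a => G a j)) -> smooth_v (fun a => F (G a)).
Proof.
move=> LF HG j k.
have -> : (fun a => F (G a) j) = (fun a => rsum (fun i => F (ev i) j * G a i)).
  apply: functional_extensionality => a; rewrite (lin_coord _ _ LF) /pair.
  by congr rsum; apply: functional_extensionality => i; ring.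
apply: (@Ck_rsum k n (fun i a => F (ev i) j * G a i)) => i.
exact/Ck_scal/HG.
Qed.

End Calculus.

Section LaxEquation.
Variable n : nat.

Lemma lie_pair_anti (b : vec n -> vec n -> vec n) : is_lie b ->
  forall x y a, pair a (b x y) = - pair a (b y x).
Proof.
move=> [[Hl Hr] [H0 _]] x y a.
have E := H0 (vadd x y).
rewrite (proj1 (Hr (vadd x y))) (proj1 (Hl x)) (proj1 (Hl y)) H0 H0 in E.
have := f_equal (pair a) E; rewrite !pair_addr.
have -> : pair a (vzero n) = 0 by rewrite /pair /rsum big1 // => i _; rewrite /vzero; ring.
lra.
Qed.

(* Testing the Hamiltonian vector field against the linear functions
   [b |-> <b, y>] gives [<X(a), y> = <a, [dH(a), y]_r>]. *)
Lemma hamiltonian_vf_pair (brr : vec n -> vec n -> vec n) (dH X : vec n -> vec n) :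
  hamiltonian_vf brr dH X -> forall a y, pair (X a) y = pair a (brr (dH a) y).
Proof.
move=> HX a y.
exact: (HX (fun b => pair b y) (fun _ => y) (smooth_pair y) (fun b => differential_pair y b) a).
Qed.

(* The invariance of H under rho^* and ad^* kills two of the three terms of
   [<a, [dH(a), y]_r>], leaving [<a, rho(r~(dH(a))) y>]. *)
Lemma casimir_bracket_r (rho br : vec n -> vec n -> vec n)
  (rr : 'I_n -> 'I_n -> R) (B : vec n -> vec n -> R) (lam : R) (dH : vec n -> vec n) :
  (forall x, lin (rho x)) -> is_lie br ->
  (forall a x, pair (rho_star rho x a) (dH a) = 0 /\ pair (ad_star br x a) (dH a) = 0) ->
  forall a y, pair a (bracket_r rho br rr B lam (dH a) y) =
              pair a (rho (rtilde rr B (dH a)) y).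
Proof.
move=> Lrho Hbr Hcas a y.
have Hrho : pair a (rho (rtilde rr B y) (dH a)) = 0.
  have := proj1 (Hcas a (rtilde rr B y)).
  by rewrite /rho_star (pair_dual_action _ _ (Lrho _)); lra.
have Had : pair a (br (dH a) y) = 0.
  have := proj2 (Hcas a y).
  by rewrite /ad_star (pair_dual_action _ _ (proj1 (proj1 Hbr) y)) (lie_pair_anti Hbr); lra.
by rewrite /bracket_r pair_addr pair_subr pair_scalr Hrho Had; ring.
Qed.

Lemma rtilde_lin (rr : 'I_n -> 'I_n -> R) (B : vec n -> vec n -> R) :
  bilinR B -> lin (rtilde rr B).
Proof.
move=> [HBadd [HBscal _]]; rewrite /rtilde /r_map /phiB.
split=> [x y|c x]; apply: functional_extensionality => j.
- rewrite /vadd -rsum_add; congr rsum; apply: functional_extensionality => i.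
  by rewrite HBadd; ring.
- rewrite /vscale -rsum_scal; congr rsum; apply: functional_extensionality => i.
  by rewrite HBscal; ring.
Qed.

Lemma nondegenerate_ext (B : vec n -> vec n -> R) (x x' : vec n) :
  bilinR B -> (forall z, (forall y, B z y = 0) -> z = vzero n) ->
  (forall y, B x y = B x' y) -> x = x'.
Proof.
move=> [HBadd [HBscal _]] Hnd Hxy.
have Hz : vadd x (vscale (-1) x') = vzero n.
  by apply: Hnd => y; rewrite HBadd HBscal Hxy; ring.
apply: functional_extensionality => i.
by have := f_equal (fun v => v i) Hz; rewrite /vadd /vscale /vzero; lra.
Qed.

Definition lax_L (e ed : 'I_n -> vec n) (a : vec n) : vec n :=
  vsum (fun i => vscale (pair a (e i)) (ed i)).

Lemma lax_L_lin (e ed : 'I_n -> vec n) : lin (lax_L e ed).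
Proof.
split=> [x y|c x]; apply: functional_extensionality => j;
  rewrite /lax_L /vadd /vscale !vsum_app.
- rewrite -rsum_add; congr rsum; apply: functional_extensionality => i.
  by rewrite /vscale pair_addl; ring.
- rewrite -rsum_scal; congr rsum; apply: functional_extensionality => i.
  by rewrite /vscale pair_scall; ring.
Qed.

Lemma lax_L_dual (B : vec n -> vec n -> R) (e ed : 'I_n -> vec n) :
  bilinR B -> (forall x y, B x y = B y x) -> is_basis e ->
  (forall i j, B (e i) (ed j) = if i == j then 1 else 0) ->
  forall b y, B (lax_L e ed b) y = pair b y.
Proof.
move=> [HBa1 [HBs1 [HBa2 HBs2]]] HBsym Hbasis Hdual b.
apply: (form_basis_ext Hbasis) => [||k]; first by split=> [x y|c x]; rewrite ?HBa2 ?HBs2.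
  exact: pair_form_r.
have Hform : linear_form (fun x : vec n => B x (e k)).
  by split=> [x y|c x]; rewrite ?HBa1 ?HBs1.
rewrite /lax_L (form_vsum _ Hform) -[RHS](rsum_ev (fun i => pair b (e i)) k).
congr rsum; apply: functional_extensionality => i.
by rewrite HBs1 HBsym Hdual eq_sym /ev; case: (i == k); ring.
Qed.

Lemma lax_equation (rho br : vec n -> vec n -> vec n) (B : vec n -> vec n -> R)
  (rr : 'I_n -> 'I_n -> R) (lam : R) (dH XH : vec n -> vec n) (e ed : 'I_n -> vec n) :
  (forall x, lin (rho x)) -> is_lie br -> invariant_form rho br B ->
  (forall a x, pair (rho_star rho x a) (dH a) = 0 /\ pair (ad_star br x a) (dH a) = 0) ->
  is_basis e -> (forall i j, B (e i) (ed j) = if i == j then 1 else 0) ->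
  hamiltonian_vf (bracket_r rho br rr B lam) dH XH ->
  forall a, lax_L e ed (XH a) = vopp (rho (rtilde rr B (dH a)) (lax_L e ed a)).
Proof.
move=> Lrho Hbr [HBbil [HBsym [HBnd [_ HBrho]]]] Hcas Hbasis Hdual HXH a.
have HLB := lax_L_dual HBbil HBsym Hbasis Hdual.
apply: (nondegenerate_ext HBbil HBnd) => y.
rewrite HLB (hamiltonian_vf_pair HXH) (casimir_bracket_r _ _ _ Lrho Hbr Hcas).
have -> : vopp (rho (rtilde rr B (dH a)) (lax_L e ed a)) =
          vscale (-1) (rho (rtilde rr B (dH a)) (lax_L e ed a)).
  by apply: functional_extensionality => i; rewrite /vopp /vscale; ring.
rewrite (proj1 (proj2 HBbil)).
by have := HBrho (rtilde rr B (dH a)) (lax_L e ed a) y; rewrite HLB; lra.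
Qed.

End LaxEquation.

Theorem theorem6p5 (n : nat)
  (br0 rho br : vec n -> vec n -> vec n) (B : vec n -> vec n -> R)
  (rr : 'I_n -> 'I_n -> R) (lam : R)
  (Htriple : triple_lie_algebra br0 rho br B rr lam)
  (H : vec n -> R) (dH : vec n -> vec n)
  (Hsmooth : smooth H)
  (HdH : forall a, has_differential H a (dH a))
  (Hcas : forall (a x : vec n),
      pair (rho_star rho x a) (dH a) = 0 /\ pair (ad_star br x a) (dH a) = 0)
  (e ed : 'I_n -> vec n) (Hbasis : is_basis e)
  (Hdual : forall i j, B (e i) (ed j) = if i == j then 1 else 0)
  (XH : vec n -> vec n)
  (HXH : hamiltonian_vf (bracket_r rho br rr B lam) dH XH) :
  let L := fun a : vec n => vsum (fun i => vscale (pair a (e i)) (ed i)) in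
  let M := fun a : vec n => rtilde rr B (dH a) in
  (forall a, (exists D, has_vdifferential L a D) /\
     forall D, has_vdifferential L a D -> D (XH a) = vopp (rho (M a) (L a))) /\
  self_dual_lax_pair br0 rho br B L M XH.
Proof.
move=> L M.
have [Hlie0 [Hlie [[Hrho [Hrep Hder]] [Hinv _]]]] := Htriple.
have Lrho : forall x, lin (rho x) := proj1 Hrho.
have LL : lin L := lax_L_lin e ed.
(* L is linear, hence its own differential, and satisfies the Lax equation. *)
have Hlax : forall a, (exists D, has_vdifferential L a D) /\
    forall D, has_vdifferential L a D -> D (XH a) = vopp (rho (M a) (L a)).
  move=> a; split; first by exists L; exact: lin_vdifferential.
  move=> D HD; rewrite -(vdifferential_unique (lin_vdifferential a LL) HD).
  exact: (lax_equation Lrho Hlie Hinv Hcas Hbasis Hdual HXH).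
have sL : smooth_v L.
  exact: (@smooth_v_lin_comp n L (fun a => a) LL (fun j k => Ck_coord k j)).
have sM : smooth_v M.
  exact: (smooth_v_lin_comp (rtilde_lin rr (proj1 Hinv)) (smooth_differential Hsmooth HdH)).
by split=> //; repeat split.
Qed.
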